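(* Let $d\geq3$ and $h\geq 3$. Then \[ \nu_2(T(d,h))=\frac{2\big((d-1)^h-1\big)}{d-2}. \]
   Context: $T(d,h)$ is the $d$-regular tree of depth $h$: a rooted tree in which the root has $d$ children, every other vertex at depth less than $h$ has $d-1$ children, and all leaves are at depth $h$. A $2$-matching of a graph is a set of edges such that every vertex is incident to at most two of them; $\nu_2(G)$ is the maximum size of a $2$-matching of $G$. *)

From mathcomp Require Import all_boot.
Set Implicit Arguments. Unset Strict Implicit. Unset Printing Implicit Defensive.

Definition edges (V : finType) (e : rel V) : {set {set V}} :=
  [set [set p.1; p.2] | p : V * V & e p.1 p.2].

Definition is_2matching (V : finType) (e : rel V) (M : {set {set V}}) : bool :=
  (M \subset edges e) && [forall x : V, #|[set f in M | x \in f]| <= 2].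

Definition nu2 (V : finType) (e : rel V) : nat :=
  \max_(M : {set {set V}} | is_2matching e M) #|M|.

(* Vertices are words (paths from the root): the root is [::]; the children
   of a word s are the words rcons s x.  The first letter ranges over
   0..d-1 (the root has d children), later letters over 0..d-2 (every other
   non-leaf vertex has d-1 children), and words have length <= h
   (the leaves are exactly the words of length h). *)

Fixpoint words (d n : nat) : seq (seq nat) :=
  if n is n'.+1 then [:: [::] & [seq x :: s | x <- iota 0 d, s <- words d n']]
  else [:: [::]].

Definition tree_word (d h : nat) (s : seq nat) : bool :=
  (size s <= h) &&
  all (fun i => nth 0 s i < (if i == 0 then d else d - 1)) (iota 0 (size s)).

Definition tree_vertices (d h : nat) : seq (seq nat) :=
  [seq s <- words d h | tree_word d h s].

Definition TV (d h : nat) : finType := seq_sub (tree_vertices d h).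

Definition parent (s t : seq nat) : bool :=
  (size t == (size s).+1) && (take (size s) t == s).

Definition tree_adj (d h : nat) : rel (TV d h) :=
  fun u v => parent (ssval u) (ssval v) || parent (ssval v) (ssval u).
Arguments tree_adj d h : clear implicits.

From mathcomp Require Import all_boot.
Set Implicit Arguments. Unset Strict Implicit. Unset Printing Implicit Defensive.

(* The vertices of odd height h - depth meet every edge (vertex, parent)
   exactly once, so a 2-matching has at most twice as many edges as there are
   such vertices.  Conversely a vertex of odd height is not a leaf and, since
   d - 1 >= 2, has two children; the edges from each such vertex to its first
   two children form a 2-matching (any other vertex only lies on the edge to
   its parent) attaining the bound.  Level k >= 1 has
   d (d-1)^(k-1) = (d-1)^k + (d-1)^(k-1) vertices, so the levels of odd height
   add up to 1 + (d-1) + ... + (d-1)^(h-1). *)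

Section TwoMatchingTransversal.
Variables (V : finType) (e : rel V) (L : {set V}).
Hypothesis edge_meets_once : forall f, f \in edges e -> #|[set v in L | v \in f]| = 1.

Lemma card_edges_sum_deg (M : {set {set V}}) : M \subset edges e ->
  #|M| = \sum_(v in L) #|[set f in M | v \in f]|.
Proof.
move=> /subsetP Msub.
have card_sep (T : finType) (A : {set T}) (P : pred T) :
    #|[set x in A | P x]| = \sum_(x in A) P x.
  rewrite -sum1_card big_mkcond [RHS]big_mkcond; apply: eq_bigr => x _.
  by rewrite inE; case: (x \in A); case: (P x).
rewrite -sum1_card.
under eq_bigr => f fM do rewrite -(edge_meets_once (Msub f fM)) card_sep.
by rewrite exchange_big; apply: eq_bigr => v _; rewrite card_sep.
Qed.

Lemma card_2matching_le (M : {set {set V}}) : is_2matching e M -> #|M| <= 2 * #|L|.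
Proof.
case/andP => Msub /forallP deg; rewrite card_edges_sum_deg // mulnC -sum_nat_const.
by apply: leq_sum => v _; exact: deg.
Qed.

Lemma nu2_eq_transversal (M : {set {set V}}) : is_2matching e M ->
  {in L, forall v, #|[set f in M | v \in f]| = 2} -> nu2 e = 2 * #|L|.
Proof.
move=> M2 degM; apply/eqP; rewrite eqn_leq; apply/andP; split.
  by apply/bigmax_leqP => N; exact: card_2matching_le.
have -> : 2 * #|L| = #|M|.
  rewrite card_edges_sum_deg; last by case/andP: M2.
  by rewrite mulnC -sum_nat_const; apply: eq_bigr => v /degM.
exact: (leq_bigmax_cond (P := fun N => is_2matching e N)).
Qed.

End TwoMatchingTransversal.

Fixpoint fixed_words (b j : nat) : seq (seq nat) :=
  if j is j'.+1 then [seq y :: t | y <- iota 0 b, t <- fixed_words b j'] else [:: [::]].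

Definition tree_letters (d : nat) (s : seq nat) : bool :=
  if s is x :: t then (x < d) && all (fun y => y < d - 1) t else true.

Definition level (d k : nat) : seq (seq nat) :=
  if k is k'.+1 then [seq x :: t | x <- iota 0 d, t <- fixed_words (d - 1) k']
  else [:: [::]].

Definition level_size (d k : nat) : nat := if k is k'.+1 then d * (d - 1) ^ k' else 1.

Fixpoint levels (d n : nat) : seq (seq nat) :=
  if n is n'.+1 then levels d n' ++ level d n' else [::].

Lemma mem_fixed_words b j s :
  (s \in fixed_words b j) = (size s == j) && all (fun y => y < b) s.
Proof.
elim: j s => [|j IH] [|x t] //=.
  by apply/negbTE/negP => /allpairsP[[y u] [_ _]].
rewrite eqSS; apply/allpairsP/idP => [[[y u] /= [Hy Hu [-> ->]]]|/andP[Hs /andP[Hx Ha]]].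
  by move: Hu; rewrite IH mem_iota in Hy *; case/andP => -> ->; rewrite andbT.
by exists (x, t); rewrite /= mem_iota IH Hs Ha.
Qed.

Lemma uniq_fixed_words b j : uniq (fixed_words b j).
Proof.
elim: j => [|j IH] //=; apply: allpairs_uniq => //; first exact: iota_uniq.
by move=> [x1 t1] [x2 t2] _ _ /= [-> ->].
Qed.

Lemma size_fixed_words b j : size (fixed_words b j) = b ^ j.
Proof. by elim: j => [|j IH] //=; rewrite size_allpairs size_iota IH expnS. Qed.

Lemma mem_level d k s : (s \in level d k) = (size s == k) && tree_letters d s.
Proof.
case: k s => [|k] [|x t] //=.
  by apply/negbTE/negP => /allpairsP[[y u] [_ _]].
rewrite eqSS; apply/allpairsP/idP => [[[y u] /= [Hy Hu [-> ->]]]|/andP[Hs /andP[Hx Ha]]].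
  by move: Hu; rewrite mem_fixed_words mem_iota in Hy *; case/andP => -> ->; rewrite andbT.
by exists (x, t); rewrite /= mem_iota mem_fixed_words Hs Ha.
Qed.

Lemma uniq_level d k : uniq (level d k).
Proof.
case: k => [|k] //=; apply: allpairs_uniq; [exact: iota_uniq | exact: uniq_fixed_words |].
by move=> [x1 t1] [x2 t2] _ _ /= [-> ->].
Qed.

Lemma size_level d k : size (level d k) = level_size d k.
Proof. by case: k => [|k] //=; rewrite size_allpairs size_iota size_fixed_words. Qed.

Lemma mem_levels d n s : (s \in levels d n) = (size s < n) && tree_letters d s.
Proof.
elim: n => [|n IH] //=; rewrite mem_cat IH mem_level -andb_orl.
by rewrite ltnS [in RHS]leq_eqVlt orbC.
Qed.

Lemma uniq_levels d n : uniq (levels d n).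
Proof.
elim: n => [|n IH] //=; rewrite cat_uniq IH uniq_level andbT /=.
apply/hasPn => s; rewrite mem_level mem_levels => /andP[/eqP -> _].
by rewrite ltnn.
Qed.

Lemma count_size_levels d n (a : pred nat) :
  count (fun s => a (size s)) (levels d n) = \sum_(k < n) a k * level_size d k.
Proof.
elim: n => [|n IH]; rewrite ?big_ord0 // big_ord_recr /= count_cat IH.
congr (_ + _); rewrite -size_level (@eq_in_count _ _ (fun _ => a n)); last first.
  by move=> s; rewrite mem_level => /andP[/eqP -> _].
by case: (a n); rewrite ?count_predT ?count_pred0 ?mul1n.
Qed.

Lemma mem_words d n s : (s \in words d n) = (size s <= n) && all (fun y => y < d) s.
Proof.
elim: n s => [|n IH] [|x t] //=.
rewrite in_cons /= ltnS.
apply/allpairsP/idP => [[[y u] /= [Hy Hu [-> ->]]]|/andP[Hs /andP[Hx Ha]]].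
  by move: Hu Hy; rewrite IH mem_iota /= => /andP[-> ->] ->.
by exists (x, t); rewrite /= mem_iota IH Hs Ha.
Qed.

Lemma uniq_words d n : uniq (words d n).
Proof.
elim: n => [|n IH] //=; apply/andP; split.
  by apply/allpairsP => -[[y u] /= [_ _]].
apply: allpairs_uniq => //; first exact: iota_uniq.
by move=> [x1 t1] [x2 t2] _ _ /= [-> ->].
Qed.

Lemma tree_wordE d h s : tree_word d h s = (size s <= h) && tree_letters d s.
Proof.
rewrite /tree_word; congr (_ && _); case: s => [|x t] //=; congr (_ && _).
rewrite -{3}(mkseq_nth 0 t) /mkseq all_map -(addn0 1) iotaDl all_map.
by apply: eq_all => i /=; rewrite add1n.
Qed.

Lemma tree_letters_lt d s : tree_letters d s -> all (fun y => y < d) s.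
Proof.
case: s => [|x t] //= /andP[-> /allP Ht] /=; apply/allP => y /Ht /leq_trans; apply.
exact: leq_subr.
Qed.

Lemma mem_tree_vertices d h s :
  (s \in tree_vertices d h) = (size s <= h) && tree_letters d s.
Proof.
rewrite mem_filter tree_wordE mem_words.
by case: (size s <= h); case E: (tree_letters d s); rewrite //= tree_letters_lt.
Qed.

Lemma perm_tree_vertices_levels d h : perm_eq (tree_vertices d h) (levels d h.+1).
Proof.
apply: uniq_perm; [exact/filter_uniq/uniq_words | exact: uniq_levels |].
by move=> s; rewrite mem_tree_vertices mem_levels ltnS.
Qed.

Lemma card_seq_sub_pred (T : choiceType) (s : seq T) (P : pred T) : uniq s ->
  #|[set u : seq_sub s | P (ssval u)]| = count P s.
Proof.
move=> Us; rewrite cardE /enum_mem size_filter.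
have -> : Finite.enum (seq_sub s) = seq_sub_enum s by rewrite unlock.
transitivity (count P (map val (seq_sub_enum s))); last by rewrite val_seq_sub_enum.
by rewrite count_map; apply: eq_count => u; rewrite !inE.
Qed.

(* Splitting level k.+1 as (d-1)^(k+1) + (d-1)^k telescopes the sum over the
   levels of odd height. *)
Lemma sum_odd_height_level_size d h : 0 < d ->
  \sum_(k < h.+1) odd (h - k) * level_size d k = \sum_(i < h) (d - 1) ^ i.
Proof.
move=> d_gt0.
suff IH n : (\sum_(k < n.+1) odd (n - k) * level_size d k = \sum_(i < n) (d - 1) ^ i)
         /\ (\sum_(k < n.+2) odd (n.+1 - k) * level_size d k = \sum_(i < n.+1) (d - 1) ^ i).
  by case: (IH h).
elim: n => [|n [IHn IHn1]]; first by rewrite !big_ord_recr !big_ord0.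
split=> //; rewrite big_ord_recr big_ord_recr /= subnn subSnn /=.
rewrite [in RHS]big_ord_recr big_ord_recr /= -IHn mul0n mul1n addn0 -addnA.
congr (_ + _).
  apply: eq_bigr => k _; have hk : k <= n by rewrite -ltnS.
  by rewrite (subSn (leqW hk)) (subSn hk) /= negbK.
by rewrite -{1}(subnK d_gt0) addn1 mulSn expnS.
Qed.

Lemma card_sep_set2_xor (T : finType) (L : {set T}) a b : (a \in L) != (b \in L) ->
  #|[set v in L | v \in [set a; b]]| = 1.
Proof.
case Ha: (a \in L); case Hb: (b \in L) => // _.
  apply: (eq_card1 (x := a)) => v; rewrite !inE.
  by case: (v =P a) => [->|_]; rewrite ?Ha //=; case: (v =P b) => [->|_]; rewrite ?Hb ?andbF.
apply: (eq_card1 (x := b)) => v; rewrite !inE.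
by case: (v =P b) => [->|_]; rewrite ?Hb ?orbT //=; case: (v =P a) => [->|_]; rewrite ?Ha ?andbF.
Qed.

Section RegularTree.
Variables d h : nat.
Hypothesis d_ge3 : 3 <= d.
Local Notation V := (TV d h).

Definition odd_height : {set V} := [set u : V | odd (h - size (ssval u))].

Lemma card_odd_height : #|odd_height| = \sum_(i < h) (d - 1) ^ i.
Proof.
rewrite /odd_height (card_seq_sub_pred (fun s => odd (h - size s))) //; last first.
  exact/filter_uniq/uniq_words.
rewrite (permP (perm_tree_vertices_levels d h)).
rewrite (count_size_levels d h.+1 (fun k => odd (h - k))).
by rewrite sum_odd_height_level_size // (leq_trans _ d_ge3).
Qed.

Lemma vertexP (u : V) : (size (ssval u) <= h) && tree_letters d (ssval u).
Proof. by rewrite -mem_tree_vertices; exact: (ssvalP u). Qed.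

Lemma parent_odd_height (u w : V) :
  parent (ssval u) (ssval w) -> (u \in odd_height) = (w \notin odd_height).
Proof.
case/andP => /eqP Hs _; rewrite !inE.
have := vertexP w; rewrite Hs => /andP[Hle _].
by rewrite -(subnSK Hle).
Qed.

Lemma edge_meets_odd_height_once f :
  f \in edges (tree_adj d h) -> #|[set v in odd_height | v \in f]| = 1.
Proof.
case/imsetP => -[a b]; rewrite inE /= /tree_adj => Hab ->.
apply: card_sep_set2_xor.
by case/orP: Hab => /parent_odd_height ->; case: (_ \in odd_height).
Qed.

Lemma parent_rcons_last s t : parent s t -> t = rcons s (last 0 t).
Proof.
case/andP => /eqP; case/lastP: t => [//|t y]; rewrite size_rcons => -[Hs].
by rewrite -cats1 take_size_cat // => /eqP ->; rewrite cats1 last_rcons.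
Qed.

Lemma parent_rcons s x : parent s (rcons s x).
Proof. by rewrite /parent size_rcons eqxx -cats1 take_size_cat // eqxx. Qed.

(* A vertex of odd height is not a leaf, and its child letter x < 2 is
   admissible because d - 1 >= 2. *)
Lemma odd_height_child (v : V) x : v \in odd_height -> x < 2 ->
  {w : V | ssval w = rcons (ssval v) x}.
Proof.
move=> vL x_lt2.
suff Hw : rcons (ssval v) x \in tree_vertices d h by exists (SeqSub Hw).
rewrite mem_tree_vertices size_rcons; case/andP: (vertexP v) => _.
move: vL; rewrite inE => /odd_gt0; rewrite subn_gt0 => -> /=.
case: (ssval v) => [|y t] /= => [_|/andP[-> Ha]].
  by rewrite (leq_trans x_lt2) // ltnW // ltnW.
by rewrite all_rcons Ha andbT (leq_trans x_lt2) // ltn_subRL addn1.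
Qed.

Definition child_edge (u w : V) : bool :=
  [&& u \in odd_height, parent (ssval u) (ssval w) & last 0 (ssval w) < 2].

Definition child_matching : {set {set V}} :=
  [set [set p.1; p.2] | p : V * V & child_edge p.1 p.2].

Lemma child_matching_sub : child_matching \subset edges (tree_adj d h).
Proof.
apply/subsetP => f /imsetP[[u w]]; rewrite inE /= => /and3P[_ Hp _] ->.
by apply/imsetP; exists (u, w) => //; rewrite inE /tree_adj /= Hp.
Qed.

Lemma deg_child_matching_odd (v : V) : v \in odd_height ->
  #|[set f in child_matching | v \in f]| = 2.
Proof.
move=> vL.
case: (odd_height_child (x := 0) vL isT) => w0 H0.
case: (odd_height_child (x := 1) vL isT) => w1 H1.
have -> : [set f in child_matching | v \in f] = [set [set v; w0]; [set v; w1]].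
  apply/setP => f; rewrite !inE; apply/andP/orP.
    case=> /imsetP[[u w]]; rewrite inE /= => /and3P[uL Hp Hl] -> /set2P[] vE; last first.
      by subst w; move: uL; rewrite (parent_odd_height Hp) vL.
    subst u; move: Hl; rewrite (parent_rcons_last Hp) last_rcons.
    case: (last 0 (ssval w)) (parent_rcons_last Hp) => [|[|//]] Hw _; [left|right];
      by apply/eqP; congr [set _; _]; apply: val_inj; rewrite /= Hw ?H0 ?H1.
  case=> /eqP ->; rewrite set21; split => //; apply/imsetP.
    by exists (v, w0); rewrite // inE /child_edge /= vL H0 last_rcons parent_rcons.
  by exists (v, w1); rewrite // inE /child_edge /= vL H1 last_rcons parent_rcons.
rewrite cards2 (_ : [set v; w0] != [set v; w1]) //; apply/eqP => E.
have : w0 \in [set v; w1] by rewrite -E set22.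
case/set2P => [/(congr1 (fun u : V => size (ssval u)))|/(congr1 (fun u : V => last 0 (ssval u)))].
  by rewrite /= H0 size_rcons => /esym/n_Sn.
by rewrite /= H0 H1 !last_rcons.
Qed.

Lemma deg_child_matching_even (v : V) : v \notin odd_height ->
  #|[set f in child_matching | v \in f]| <= 1.
Proof.
move=> vL.
have to_parent f : f \in [set f in child_matching | v \in f] ->
    exists u : V, f = [set u; v] /\ ssval u = take (size (ssval v)).-1 (ssval v).
  rewrite inE => /andP[/imsetP[[u w]]]; rewrite inE /= => /and3P[uL Hp _] -> /set2P[] vE.
    by subst u; rewrite uL in vL.
  by subst w; exists u; split => //; case/andP: Hp => /eqP -> /eqP ->.
apply/card_le1_eqP => f1 f2 /to_parent[u1 [-> E1]] /to_parent[u2 [-> E2]].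
by have -> : u1 = u2 by apply: val_inj; rewrite /= E1 E2.
Qed.

Lemma child_matching_2matching : is_2matching (tree_adj d h) child_matching.
Proof.
rewrite /is_2matching child_matching_sub; apply/forallP => v.
have [vL|vL] := boolP (v \in odd_height); first by rewrite deg_child_matching_odd.
exact: leq_trans (deg_child_matching_even vL) _.
Qed.

Lemma nu2_tree : nu2 (tree_adj d h) = 2 * \sum_(i < h) (d - 1) ^ i.
Proof.
rewrite -card_odd_height.
apply: (nu2_eq_transversal edge_meets_odd_height_once child_matching_2matching).
exact: deg_child_matching_odd.
Qed.

End RegularTree.

Theorem corollary5p5 (d h : nat) :
  3 <= d -> 3 <= h ->
  nu2 (tree_adj d h) = (2 * ((d - 1) ^ h - 1)) %/ (d - 2).
Proof.
move=> d_ge3 _; rewrite nu2_tree //.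
rewrite [_ ^ h - 1]subn1 predn_exp -subn1 -subnDA mulnCA mulKn //.
by rewrite subn_gt0.
Qed.
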